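(* Let $p\ge 2$ be an integer and let $G$ be a finite simple $[p+2,p]$-graph of order $n$ with minimum degree $\delta(G)\ge p$ and $n\ge 2p+3$. Then $G$ is triangle-free if and only if $p$ is even, $p\ge 6$, and $G$ is isomorphic to $C_5^{(p/2)}$.
   Context: For integers $s,t$, a graph $G$ is called an $[s,t]$-graph if every induced subgraph of $G$ on $s$ vertices has at least $t$ edges. For a graph $H$ and a positive integer $k$, the $k$-blow-up $H^{(k)}$ is the graph obtained by replacing each vertex of $H$ by $k$ distinct vertices, where a copy of $u$ is adjacent to a copy of $v$ if and only if $uv$ is an edge of $H$ (in particular copies of the same vertex are pairwise nonadjacent). $C_5$ denotes the cycle on $5$ vertices. *)

From mathcomp Require Import all_boot.
Set Implicit Arguments. Unset Strict Implicit. Unset Printing Implicit Defensive.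

Definition simple_graph (T : finType) (e : rel T) : Prop :=
  irreflexive e /\ symmetric e.

Definition edges_in (T : finType) (e : rel T) (S : {set T}) : nat :=
  #|[set U in powerset S | [exists x, exists y, (U == [set x; y]) && e x y]]|.

Definition st_graph (T : finType) (e : rel T) (s t : nat) : Prop :=
  forall S : {set T}, #|S| = s -> t <= edges_in e S.

Definition deg (T : finType) (e : rel T) (x : T) : nat := #|[set y | e x y]|.

Definition min_degree_ge (T : finType) (e : rel T) (d : nat) : Prop :=
  forall x : T, d <= deg e x.

Definition triangle_free (T : finType) (e : rel T) : Prop :=
  forall x y z : T, ~ [&& e x y, e y z & e x z].

Definition C5 : rel 'I_5 :=
  fun i j => ((i.+1 %% 5 == j) || (j.+1 %% 5 == i)).

Definition blowup (V : finType) (h : rel V) (k : nat) : rel (V * 'I_k) :=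
  fun u v => h u.1 v.1.

Definition isomorphic (T U : finType) (e : rel T) (h : rel U) : Prop :=
  exists f : T -> U, bijective f /\ forall x y, e x y = h (f x) (f y).
Arguments blowup {V} h k.

(* Triangle-freeness makes every neighbourhood independent, and in an induced
   subgraph on two vertices x, y plus an independent set every edge meets x or y.
   Counting these edges against the [p+2,p] condition first bounds independent
   sets by p (one of size p+1 would force its complement, of size at least p+2,
   to be independent), so G is p-regular.  For non-neighbours x <> y of a vertex v,
   the set {x, y} u N(v) then gives c(x) + c(y) + [xy in E] >= p, where
   c(x) = |N(v) n N(x)|, whereas c(x) + c(y) <= p when xy is an edge.  For odd p
   this yields a triangle among the non-neighbours of v.  For p = 2k it forces
   c(x) >= k on all non-neighbours, with equality on edges, and then two
   non-neighbours of v with a common neighbour outside N(v) have the same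
   neighbourhood.  Consequently every vertex is a twin of a vertex of an induced
   pentagon, each twin class has k elements, G is the k-blow-up of C5, and
   n = 5k >= 2p + 3 gives p >= 6.  Conversely, blow-ups of C5 are triangle-free. *)

From mathcomp Require Import all_boot zify ssralg zmodp.

Set Implicit Arguments.
Unset Strict Implicit.
Unset Printing Implicit Defensive.

Lemma exists_subset_card (T : finType) (A : {set T}) n :
  n <= #|A| -> exists2 B : {set T}, B \subset A & #|B| = n.
Proof.
case/card_geqP => s [s_uniq <- sA]; exists [set x in s].
  by apply/subsetP => x; rewrite inE; apply: sA.
by rewrite cardsE; apply/card_uniqP.
Qed.

Lemma card_setIU1_le (T : finType) (A B : {set T}) y :
  #|A :&: (y |: B)| <= (y \in A) + #|A :&: B|.
Proof.
rewrite setIUr; apply: leq_trans (leq_card_setU _ _) _; rewrite leq_add2r.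
have [yA | nyA] := boolP (y \in A).
  by apply: leq_trans (subset_leq_card (subsetIr _ _)) _; rewrite cards1.
rewrite leqn0 cards_eq0; apply/eqP/setP => z; rewrite !inE.
by apply/negbTE/andP => -[zA /eqP zy]; rewrite -zy zA in nyA.
Qed.

Lemma card_preimset_fibres (T V : finType) (f : T -> V) (P : pred V) :
  #|[set t | P (f t)]| = \sum_(i | P i) #|[set t | f t == i]|.
Proof.
rewrite -sum1dep_card (partition_big f P) //=.
apply: eq_bigr => i Pi; rewrite sum1dep_card; apply: eq_card => t; rewrite !inE.
by case: eqP => [->|]; rewrite ?Pi ?andbF.
Qed.

Lemma isomorphic_blowup (T V : finType) (e : rel T) (h : rel V) (f : T -> V) k :
  (forall u w, e u w = h (f u) (f w)) -> (forall i, #|[set t | f t == i]| = k) ->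
  isomorphic e (blowup h k).
Proof.
move=> ef card_fibre.
pose fibre t := enum [set u | f u == f t].
have index_lt t : index t (fibre t) < k.
  by rewrite -(card_fibre (f t)) cardE index_mem mem_enum inE.
pose g t := (f t, Ordinal (index_lt t)).
have g_inj : injective g.
  move=> t u [ftu idx_tu].
  rewrite -[t](nth_index t (_ : t \in fibre t)) ?mem_enum ?inE //.
  by rewrite idx_tu /fibre ftu nth_index // mem_enum inE.
exists g; split; last by move=> u w; rewrite ef.
apply: inj_card_bij g_inj _.
have := card_preimset_fibres f predT; rewrite (eq_bigr (fun=> k)) // sum_nat_const.
rewrite card_prod card_ord => <-; exact: max_card.
Qed.

Lemma C5_sym : symmetric C5.
Proof. by move=> i j; rewrite /C5 orbC. Qed.

Lemma C5_triangle_free (i j l : 'I_5) : ~~ [&& C5 i j, C5 j l & C5 i l].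
Proof.
by case: i => [[|[|[|[|[|?]]]]] ?] //; case: j => [[|[|[|[|[|?]]]]] ?] //;
  case: l => [[|[|[|[|[|?]]]]] ?].
Qed.

Lemma C5_addr (i j l : 'I_5) : C5 (j + i)%R (l + i)%R = C5 j l.
Proof.
by case: i => [[|[|[|[|[|?]]]]] ?] //; case: j => [[|[|[|[|[|?]]]]] ?] //;
  case: l => [[|[|[|[|[|?]]]]] ?].
Qed.

Lemma C5_nbhd_sums_const (s : 'I_5 -> nat) k :
  (forall i, \sum_(j | C5 i j) s j = k.*2) -> forall i, s i = k.
Proof.
move=> hs i; apply/eqP; move: i; apply/forallP.
have := hs (@Ordinal 5 0 isT); rewrite big_mkcond !big_ord_recl big_ord0 /= => h0.
have := hs (@Ordinal 5 1 isT); rewrite big_mkcond !big_ord_recl big_ord0 /= => h1.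
have := hs (@Ordinal 5 2 isT); rewrite big_mkcond !big_ord_recl big_ord0 /= => h2.
have := hs (@Ordinal 5 3 isT); rewrite big_mkcond !big_ord_recl big_ord0 /= => h3.
have := hs (@Ordinal 5 4 isT); rewrite big_mkcond !big_ord_recl big_ord0 /= => h4.
rewrite -(big_andE predT) !big_ord_recl big_ord0 /=.
by apply/and5P; split; apply/eqP; lia.
Qed.

Section SimpleGraph.

Variables (T : finType) (e : rel T).
Local Notation N x := [set y | e x y].

Definition independent (I : {set T}) := {in I &, forall a b, ~~ e a b}.

Lemma edges_in_independent I : independent I -> edges_in e I = 0.
Proof.
move=> iI; apply/eqP; rewrite cards_eq0; apply/eqP/setP => U; rewrite !inE.
apply/negP => /andP [/subsetP sUI /existsP [a /existsP [b /andP [/eqP defU eab]]]].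
have aI : a \in I by apply: sUI; rewrite defU !inE eqxx.
have bI : b \in I by apply: sUI; rewrite defU !inE eqxx orbT.
by move: (iI a b aI bI); rewrite eab.
Qed.

Hypotheses (irr : irreflexive e) (sym : symmetric e).

Lemma edges_in_setU1 x S : edges_in e (x |: S) <= #|N x :&: S| + edges_in e S.
Proof.
apply: leq_trans (leq_add (leq_imset_card (fun y => [set x; y]) _) (leqnn _)).
apply: leq_trans (leq_card_setU _ _); apply: subset_leq_card; apply/subsetP => U.
rewrite !inE => /andP [/subsetP sU /existsP [a /existsP [b /andP [/eqP defU eab]]]].
have aS : a \in x |: S by apply: sU; rewrite defU !inE eqxx.
have bS : b \in x |: S by apply: sU; rewrite defU !inE eqxx orbT.
have edge_at_x y : e x y -> y \in x |: S ->
    [set x; y] \in [set [set x; w] | w in N x :&: S].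
  move=> exy; rewrite in_setU1 => /orP [/eqP yx | yS].
    by move: exy; rewrite yx irr.
  by apply: imset_f; rewrite !inE exy.
case: (eqVneq a x) => [ax | nax].
  by rewrite defU ax edge_at_x // -ax.
case: (eqVneq b x) => [bx | nbx].
  by rewrite defU bx setUC edge_at_x // 1?sym -bx.
move: aS bS; rewrite !in_setU1 (negbTE nax) (negbTE nbx) /= => aS bS.
apply/orP; right; rewrite defU subUset !sub1set aS bS /=.
by apply/existsP; exists a; apply/existsP; exists b; rewrite eqxx eab.
Qed.

Lemma edges_in_setU1_independent x I :
  independent I -> edges_in e (x |: I) <= #|N x :&: I|.
Proof.
by move=> iI; have := edges_in_setU1 x I; rewrite (edges_in_independent iI) addn0.
Qed.

End SimpleGraph.

Section TriangleFree.

Variables (T : finType) (e : rel T) (p : nat).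
Hypotheses (irr : irreflexive e) (sym : symmetric e) (p_ge2 : 2 <= p)
  (st : st_graph e (p + 2) p) (min_deg : min_degree_ge e p)
  (large : 2 * p + 3 <= #|T|) (tf : triangle_free e).
Local Notation N x := [set y | e x y].

Lemma no_triangle x y z : e x y -> e y z -> e x z -> False.
Proof. by move=> exy eyz exz; apply: (@tf x y z); rewrite exy eyz exz. Qed.

Lemma independent_card_lt I : independent e I -> #|I| < p + 2.
Proof.
move=> iI; rewrite ltnNge; apply/negP => /exists_subset_card [J sJI cJ].
by have := st cJ; rewrite (edges_in_independent (sub_in2 (subsetP sJI) iI)); lia.
Qed.

Lemma nbhd_independent_max J z :
  independent e J -> #|J| = p.+1 -> z \notin J -> p <= #|N z :&: J|.
Proof.
move=> iJ cJ zJ; have cS : #|z |: J| = p + 2 by rewrite cardsU1 zJ cJ addn2.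
exact: leq_trans (st cS) (edges_in_setU1_independent irr sym z iJ).
Qed.

Lemma independent_card_le I : independent e I -> #|I| <= p.
Proof.
move=> iI; rewrite leqNgt; apply/negP => /exists_subset_card [J sJI cJ].
have iJ : independent e J := sub_in2 (subsetP sJI) iI.
suff iJc : independent e (~: J).
  by have := independent_card_lt iJc; have := cardsC J; rewrite cJ; lia.
move=> a b; rewrite !inE => aJ bJ; apply/negP => eab.
have nbhd_a := nbhd_independent_max iJ cJ aJ.
have nbhd_b := nbhd_independent_max iJ cJ bJ.
have : #|(N a :&: J) :|: (N b :&: J)| <= #|J|.
  by apply: subset_leq_card; rewrite -setIUl subsetIr.
have := cardsUI (N a :&: J) (N b :&: J); rewrite cJ => cardUI cardU.
have /card_gt0P [w] : 0 < #|(N a :&: J) :&: (N b :&: J)| by lia.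
rewrite !inE => /andP [/andP [eaw _] /andP [ebw _]].
exact: no_triangle eab ebw eaw.
Qed.

Lemma nbhd_independent v : independent e (N v).
Proof.
move=> a b; rewrite !inE => eva evb; apply/negP => eab.
exact: no_triangle eva eab evb.
Qed.

Lemma card_nbhd v : #|N v| = p.
Proof.
by apply/eqP; rewrite eqn_leq (independent_card_le (@nbhd_independent v)); apply: min_deg.
Qed.

Definition non_nbhd v := [set x | (x != v) && ~~ e v x].

Definition codeg v x := #|N v :&: N x|.

Lemma card_non_nbhd v : p + 2 <= #|non_nbhd v|.
Proof.
have -> : non_nbhd v = ~: (v |: N v) by apply/setP => x; rewrite !inE negb_or.
by have := cardsC (v |: N v); rewrite cardsU1 inE irr card_nbhd; lia.
Qed.

Lemma mem_non_nbhd v x w : e x w -> ~~ e v w -> ~~ e v x -> x \in non_nbhd v.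
Proof.
move=> exw nvw nvx; rewrite inE nvx andbT.
by apply/eqP => xv; rewrite -xv exw in nvw.
Qed.

Lemma independent_non_nbhd_card_lt v (A : {set T}) :
  A \subset non_nbhd v -> independent e A -> #|A| < p.
Proof.
move=> /subsetP sA iA.
have nvA a : a \in A -> ~~ e v a by move/sA; rewrite inE => /andP [].
have iVA : independent e (v |: A).
  move=> a b; rewrite !in_setU1 => /orP [/eqP -> | aA] /orP [/eqP -> | bA].
  - by rewrite irr.
  - exact: nvA.
  - by rewrite sym nvA.
  - exact: iA.
have vA : v \notin A by apply/negP => /sA; rewrite inE eqxx.
by have := independent_card_le iVA; rewrite cardsU1 vA.
Qed.

Lemma codeg_non_nbhd_pair v x y :
  x \in non_nbhd v -> y \in non_nbhd v -> x != y ->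
  p <= codeg v x + codeg v y + e x y.
Proof.
rewrite !inE => /andP [_ nvx] /andP [_ nvy] xy.
have cS : #|x |: (y |: N v)| = p + 2.
  by rewrite !cardsU1 card_nbhd !inE (negbTE xy) (negbTE nvx) (negbTE nvy) /=; lia.
have := leq_trans (st cS) (edges_in_setU1 irr sym x (y |: N v)).
have := edges_in_setU1_independent irr sym y (@nbhd_independent v).
have := card_setIU1_le (N x) (N v) y.
by rewrite /codeg inE (setIC (N v) (N x)) (setIC (N v) (N y)); lia.
Qed.

Lemma codeg_adjacent v x y : e x y -> codeg v x + codeg v y <= p.
Proof.
move=> exy; rewrite /codeg -(card_nbhd v) -cardsUI.
have -> : (N v :&: N x) :&: (N v :&: N y) = set0.
  apply/setP => w; rewrite !inE; apply/negbTE/negP => /andP [/andP [_ exw] /andP [_ eyw]].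
  exact: no_triangle exy eyw exw.
by rewrite cards0 addn0 subset_leq_card // -setIUr subsetIl.
Qed.

Lemma p_even : ~~ odd p.
Proof.
apply/negP => p_odd.
have p_def : p = (p./2).*2.+1 by rewrite -[LHS]odd_double_half p_odd.
have /card_gt0P [v _] : 0 < #|T| by lia.
set P := [set x | p <= (codeg v x).*2].
have : #|non_nbhd v :&: P| < p.
  apply: independent_non_nbhd_card_lt; first exact: subsetIl.
  move=> a b; rewrite !inE => /andP [_ pa] /andP [_ pb]; apply/negP => eab.
  by have := codeg_adjacent v eab; lia.
have := cardsID P (non_nbhd v); have := card_non_nbhd v => cardF cardID cardFP.
have /card_gt2P [x [y [z [[xL yL zL] [nxy nyz nzx]]]]] : 2 < #|non_nbhd v :\: P| by lia.
have adj a b : a \in non_nbhd v :\: P -> b \in non_nbhd v :\: P -> a != b -> e a b.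
  move=> /setDP [aF aP] /setDP [bF bP] nab.
  apply: contraTT (codeg_non_nbhd_pair aF bF nab) => /negbTE ->.
  by move: aP bP; rewrite !inE -!ltnNge; lia.
apply: no_triangle (adj x y xL yL nxy) (adj y z yL zL nyz) (adj x z xL zL _).
by rewrite eq_sym.
Qed.

Section EvenDegree.

Variable k : nat.
Hypothesis p_double : p = k.*2.

Lemma codeg_non_nbhd_ge v x : x \in non_nbhd v -> k <= codeg v x.
Proof.
move=> xF; rewrite leqNgt; apply/negP => small.
have nx_edge a b : a \in non_nbhd v -> b \in non_nbhd v -> a != x -> ~~ e x a -> ~~ e a b.
  move=> aF bF ax nxa; apply/negP => eab.
  have bx : x != b by apply/eqP => xb; rewrite xb sym eab in nxa.
  have := codeg_non_nbhd_pair xF aF; rewrite eq_sym (negbTE nxa) addn0 => /(_ ax).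
  have := codeg_non_nbhd_pair xF bF bx; have := leq_b1 (e x b).
  by have := codeg_adjacent v eab; lia.
have : #|non_nbhd v :\ x| < p.
  apply: independent_non_nbhd_card_lt; first exact: subD1set.
  move=> a b; rewrite !in_setD1 => /andP [ax aF] /andP [bx bF]; apply/negP => eab.
  have [xa | nxa] := boolP (e x a).
    have [xb | nxb] := boolP (e x b); first exact: no_triangle xa eab xb.
    by rewrite sym (negbTE (nx_edge b a bF aF bx nxb)) in eab.
  by rewrite (negbTE (nx_edge a b aF bF ax nxa)) in eab.
by have := cardsD1 x (non_nbhd v); have := card_non_nbhd v; rewrite xF; lia.
Qed.

Lemma nbhd_eq_of_codeg_gt v x : x \in non_nbhd v -> k < codeg v x -> N x = N v.
Proof.
move=> xF big; apply/eqP; rewrite eqEcard !card_nbhd leqnn andbT.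
apply/subsetP => u; rewrite !inE => exu; apply/negPn/negP => nvu.
have nvx : ~~ e v x by move: xF; rewrite inE => /andP [].
have uF : u \in non_nbhd v by apply: (mem_non_nbhd (w := x)); rewrite // sym.
by have := codeg_adjacent v exu; have := codeg_non_nbhd_ge uF; lia.
Qed.

Lemma codeg_non_nbhd_edge v x y :
  x \in non_nbhd v -> y \in non_nbhd v -> e x y -> codeg v x = k.
Proof.
move=> xF yF exy; have := codeg_adjacent v exy.
by have := codeg_non_nbhd_ge xF; have := codeg_non_nbhd_ge yF; lia.
Qed.

Lemma nbhd_split v x y : x \in non_nbhd v -> y \in non_nbhd v -> e x y ->
  N v :&: N x = N v :\: N y.
Proof.
move=> xF yF exy; apply/eqP; rewrite eqEcard; apply/andP; split.
  apply/subsetP => w; rewrite !inE => /andP [evw exw]; rewrite evw andbT.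
  by apply/negP => eyw; apply: no_triangle exy eyw exw.
have := codeg_non_nbhd_edge yF xF; rewrite sym => /(_ exy).
have := codeg_non_nbhd_edge xF yF exy.
by rewrite cardsD card_nbhd /codeg; lia.
Qed.

Lemma twins_of_common_nbhd v x y x' :
  x \in non_nbhd v -> y \in non_nbhd v -> x' \in non_nbhd v -> e x y -> e y x' ->
  N x = N x'.
Proof.
move=> xF yF x'F exy eyx'; have [<- // | nxx'] := eqVneq x x'.
have ex'y : e x' y by rewrite sym.
have same_half : N v :&: N x = N v :&: N x'.
  by rewrite (nbhd_split xF yF exy) (nbhd_split x'F yF ex'y).
have x'Fx : x' \in non_nbhd x.
  rewrite inE eq_sym nxx' /=; apply/negP => exx'; exact: no_triangle exy eyx' exx'.
symmetry; apply: nbhd_eq_of_codeg_gt x'Fx _.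
have sub : y |: (N v :&: N x) \subset N x :&: N x'.
  apply/subsetP => w; rewrite in_setU1 => /orP [/eqP -> | wvx].
    by rewrite !inE exy ex'y.
  have wvx' : w \in N v :&: N x' by rewrite -same_half.
  by move: wvx wvx'; rewrite !inE => /andP [_ ->] /andP [_ ->].
have yv : y \notin N v :&: N x by move: yF; rewrite !inE negb_and => /andP [_ ->].
have := codeg_non_nbhd_edge xF yF exy; rewrite /codeg => cvx.
by have := subset_leq_card sub; rewrite cardsU1 yv cvx.
Qed.

Definition induced_C5 (b : 'I_5 -> T) := forall i j, e (b i) (b j) = C5 i j.

Lemma induced_C5_rot b i : induced_C5 b -> induced_C5 (fun j => b (j + i)%R).
Proof. by move=> hb j l; rewrite hb C5_addr. Qed.

Lemma induced_C5_nbhd0 b t :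
  induced_C5 b -> e (b 0%R) t -> N t = N (b 1%R) \/ N t = N (b 4%R).
Proof.
move=> hb e0t; have et0 : e t (b 0%R) by rewrite sym.
(* t and b 4 (resp. b 1) share the neighbour b 0 outside N(b 2) (resp. N(b 3)). *)
have [et3 | net3] := boolP (e t (b 3%R)).
  right; apply: (twins_of_common_nbhd (v := b 2%R) (y := b 0%R)); rewrite ?hb //.
  - apply: (mem_non_nbhd (w := b 0%R)); rewrite ?hb //.
    by apply/negP => e2t; apply: no_triangle e2t et3 _; rewrite hb.
  - by apply: (mem_non_nbhd (w := b 4%R)); rewrite hb.
  - by apply: (mem_non_nbhd (w := b 0%R)); rewrite hb.
left; apply: (twins_of_common_nbhd (v := b 3%R) (y := b 0%R)); rewrite ?hb //.
- by apply: (mem_non_nbhd (w := b 0%R)); rewrite ?hb // sym.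
- by apply: (mem_non_nbhd (w := b 1%R)); rewrite hb.
- by apply: (mem_non_nbhd (w := b 0%R)); rewrite hb.
Qed.

Lemma induced_C5_nbhd b i t : induced_C5 b -> e (b i) t -> exists j, N t = N (b j).
Proof.
move=> hb; rewrite -[i]GRing.add0r => /(induced_C5_nbhd0 (induced_C5_rot i hb)).
by case=> ->; eexists.
Qed.

Lemma induced_C5_cover b t : induced_C5 b -> exists j, N t = N (b j).
Proof.
move=> hb; have [e0t | ne0t] := boolP (e (b ord0) t); first exact: induced_C5_nbhd e0t.
have [-> | tb] := eqVneq t (b ord0); first by exists ord0.
have tF : t \in non_nbhd (b ord0) by rewrite inE tb ne0t.
have /card_gt0P [s] : 0 < codeg (b ord0) t by have := codeg_non_nbhd_ge tF; lia.
rewrite !inE => /andP [e0s est].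
have [j Es] := induced_C5_nbhd hb e0s.
apply: (induced_C5_nbhd (i := j) hb).
by move/setP/(_ t): Es; rewrite !inE => <-; rewrite sym.
Qed.

Lemma exists_induced_C5 : exists b, induced_C5 b.
Proof.
have /card_gt0P [v _] : 0 < #|T| by lia.
have : [exists x in non_nbhd v, exists y in non_nbhd v, e x y].
  apply: contraT => /exists_inPn none.
  have iF : independent e (non_nbhd v).
    by move=> a b aF bF; move: (none a aF) => /exists_inPn/(_ b bF).
  by have := independent_card_le iF; have := card_non_nbhd v; lia.
case/exists_inP => x xF /exists_inP [y yF exy].
have k_gt0 : 0 < k by lia.
have /card_gt0P [a1] := leq_trans k_gt0 (codeg_non_nbhd_ge xF).
have /card_gt0P [a4] := leq_trans k_gt0 (codeg_non_nbhd_ge yF).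
rewrite !inE => /andP [eva4 eya4] /andP [eva1 exa1].
have nvx : ~~ e v x by move: xF; rewrite inE => /andP [].
have nvy : ~~ e v y by move: yF; rewrite inE => /andP [].
have na1y : ~~ e a1 y by apply/negP => ea1y; apply: no_triangle _ exy ea1y; rewrite sym.
have na1a4 : ~~ e a1 a4 by apply/negP => ea1a4; apply: no_triangle eva1 ea1a4 eva4.
have nxa4 : ~~ e x a4 by apply/negP; apply: no_triangle exy eya4.
exists (fun i : 'I_5 => nth v [:: v; a1; x; y; a4] i).
have E := (eva1, exa1, exy, eya4, eva4, negbTE nvx, negbTE nvy, negbTE na1y,
  negbTE na1a4, negbTE nxa4).
by case=> [[|[|[|[|[|//]]]]] ?]; case=> [[|[|[|[|[|//]]]]] ?]; rewrite /C5 /=;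
  first [by rewrite irr | by rewrite E | by rewrite sym E].
Qed.

Lemma C5_quotient : exists2 cls : T -> 'I_5,
  forall u w, e u w = C5 (cls u) (cls w) & forall i, #|[set t | C5 i (cls t)]| = p.
Proof.
have [b hb] := exists_induced_C5.
have [cls Ecls] := fin_all_exists (fun t => induced_C5_cover t hb).
have twin t w : e t w = e (b (cls t)) w by move/setP/(_ w): (Ecls t); rewrite !inE.
exists cls => [u w | i]; first by rewrite (twin u) sym (twin w) sym hb.
rewrite -(card_nbhd (b i)); apply: eq_card => t.
by rewrite !inE [RHS]sym (twin t) hb C5_sym.
Qed.

Lemma isomorphic_C5_blowup : isomorphic e (blowup C5 k).
Proof.
have [cls adj card_nbhd_cls] := C5_quotient.
apply: isomorphic_blowup adj _; apply: C5_nbhd_sums_const => i.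
by rewrite -card_preimset_fibres card_nbhd_cls.
Qed.

Lemma p_ge6 : 6 <= p.
Proof.
have [f [f_bij _]] := isomorphic_C5_blowup.
by have := bij_eq_card f_bij; rewrite card_prod !card_ord; lia.
Qed.

End EvenDegree.

End TriangleFree.

Theorem lemma5 (p : nat) (T : finType) (e : rel T) :
  2 <= p ->
  simple_graph e ->
  st_graph e (p + 2) p ->
  min_degree_ge e p ->
  2 * p + 3 <= #|T| ->
  (triangle_free e <->
   [/\ ~~ odd p, 6 <= p & isomorphic e (blowup C5 p./2)]).
Proof.
move=> p_ge2 [irr sym] st min_deg large; split => [tf | [_ _ [f [_ ef]]] x y z].
  have p_ev : ~~ odd p by apply: p_even.
  have p_half : p = p./2.*2 by rewrite -[LHS]odd_double_half (negbTE p_ev).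
  by split => //; [apply: p_ge6 p_half | apply: isomorphic_C5_blowup p_half].
by rewrite !ef /blowup; apply/negP/C5_triangle_free.
Qed.
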